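(* Let $C,D$ be d-cones with a bilinear map $\langle\cdot,\cdot\rangle\colon C\times D\to\overline{\mathbb{R}}_+$ which is non-singular and Scott-continuous in each argument separately. Let $C_0\subseteq C$ be a subcone which is d-dense in $C$. Then the weak upper topologies $w(D,C_0)$ and $w(D,C)$ on $D$ coincide.
   Context: $\overline{\mathbb{R}}_+=[0,+\infty)\cup\{+\infty\}$ with its usual order and extended arithmetic ($r+\infty=+\infty$, $r\cdot\infty=\infty$ for $r>0$, $0\cdot\infty=0$), with the upper topology (open sets $\emptyset$, $\overline{\mathbb{R}}_+$, $]r,+\infty]$ for $r\in[0,\infty)$); lower semicontinuous means continuous for it. A cone is a commutative monoid with a scalar multiplication by $[0,\infty)$ satisfying $r(x+y)=rx+ry$, $(r+s)x=rx+sx$, $(rs)x=r(sx)$, $1x=x$, $0x=0$. A d-cone is a cone with a directed complete partial order (every directed family has a supremum) such that addition $C\times C\to C$ and scalar multiplication $[0,\infty)\times C\to C$ are Scott-continuous (order preserving and preserving directed suprema; $[0,\infty)$ with its usual order). A d-subcone of $C$ is a subcone closed under suprema (taken in $C$) of directed families; a subcone $C_0$ is d-dense if the only d-subcone of $C$ containing $C_0$ is $C$. A bilinear map is additive and homogeneous in each argument; it is non-singular if for $y\ne y'$ in $D$ some $x\in C$ has $\langle x,y\rangle\ne\langle x,y'\rangle$. For $x\in C$, $\widehat x(y)=\langle x,y\rangle$; for $B\subseteq C$, $w(D,B)$ is the coarsest topology on $D$ making all $\widehat x$, $x\in B$, lower semicontinuous. *)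

From Stdlib Require Import Reals.
Open Scope R_scope.

(* ---------- Extended nonnegative reals  R̄+ = [0,∞) ∪ {∞} ----------
   Represented by option R: Some r = the finite value r, None = +∞.
   Nonnegativity of the values of a pairing is imposed as a hypothesis. *)
Definition ER := option R.
Definition ER_nonneg (v : ER) : Prop :=
  match v with Some a => 0 <= a | None => True end.

Definition eadd (u v : ER) : ER :=
  match u, v with Some a, Some b => Some (a + b) | _, _ => None end.

(* r * v for r in [0,∞), with 0 * ∞ = 0 *)
Definition emul (r : R) (v : ER) : ER :=
  match v with
  | Some a => Some (r * a)
  | None => if Req_EM_T r 0 then Some 0 else None
  end.

Definition ele (u v : ER) : Prop :=
  match u, v with
  | Some a, Some b => a <= b
  | _, None => True
  | None, Some _ => False
  end.

(* the basic open set ]r,+∞] of the upper topology, r in [0,∞) *)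
Definition egt (r : R) (v : ER) : Prop :=
  match v with Some a => r < a | None => True end.

Definition is_esup (P : ER -> Prop) (s : ER) : Prop :=
  (forall v, P v -> ele v s) /\ (forall u, (forall v, P v -> ele v u) -> ele s u).

Definition directed {T : Type} (le : T -> T -> Prop) (P : T -> Prop) : Prop :=
  (exists x, P x) /\
  (forall a b, P a -> P b -> exists c, P c /\ le a c /\ le b c).

Definition is_lub {T : Type} (le : T -> T -> Prop) (P : T -> Prop) (s : T) : Prop :=
  (forall x, P x -> le x s) /\ (forall u, (forall x, P x -> le x u) -> le s u).

Record dcone := DCone {
  car :> Type;
  czero : car;
  cadd : car -> car -> car;
  csmul : R -> car -> car;      (* only used for scalars in [0,∞) *)
  cle : car -> car -> Prop;
  cadd_assoc : forall x y z, cadd x (cadd y z) = cadd (cadd x y) z;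
  cadd_comm : forall x y, cadd x y = cadd y x;
  cadd_0 : forall x, cadd x czero = x;
  csmul_addr : forall r x y, 0 <= r -> csmul r (cadd x y) = cadd (csmul r x) (csmul r y);
  csmul_addl : forall r s x, 0 <= r -> 0 <= s ->
      csmul (r + s) x = cadd (csmul r x) (csmul s x);
  csmul_mul : forall r s x, 0 <= r -> 0 <= s -> csmul (r * s) x = csmul r (csmul s x);
  csmul_1 : forall x, csmul 1 x = x;
  csmul_0 : forall x, csmul 0 x = czero;
  cle_refl : forall x, cle x x;
  cle_trans : forall x y z, cle x y -> cle y z -> cle x z;
  cle_antisym : forall x y, cle x y -> cle y x -> x = y;
  c_dcpo : forall P : car -> Prop, directed cle P -> exists s, is_lub cle P s;
  cadd_mono : forall x x' y y', cle x x' -> cle y y' -> cle (cadd x y) (cadd x' y');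
  cadd_sup : forall (P : car * car -> Prop) s1 s2,
      directed (fun p q => cle (fst p) (fst q) /\ cle (snd p) (snd q)) P ->
      is_lub cle (fun x => exists p, P p /\ fst p = x) s1 ->
      is_lub cle (fun y => exists p, P p /\ snd p = y) s2 ->
      is_lub cle (fun z => exists p, P p /\ cadd (fst p) (snd p) = z) (cadd s1 s2);
  csmul_mono : forall r s x y, 0 <= r -> r <= s -> cle x y -> cle (csmul r x) (csmul s y);
  csmul_sup : forall (P : R * car -> Prop) r x,
      (forall p, P p -> 0 <= fst p) ->
      directed (fun p q => fst p <= fst q /\ cle (snd p) (snd q)) P ->
      0 <= r ->
      is_lub Rle (fun a => exists p, P p /\ fst p = a) r ->
      is_lub cle (fun y => exists p, P p /\ snd p = y) x ->
      is_lub cle (fun z => exists p, P p /\ csmul (fst p) (snd p) = z) (csmul r x)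
}.

Arguments czero {d}.
Arguments cadd {d}.
Arguments csmul {d}.
Arguments cle {d}.

Definition subcone (C : dcone) (S : C -> Prop) : Prop :=
  S czero /\ (forall x y, S x -> S y -> S (cadd x y)) /\
  (forall r x, 0 <= r -> S x -> S (csmul r x)).

Definition d_subcone (C : dcone) (S : C -> Prop) : Prop :=
  subcone C S /\
  (forall P s, (forall x, P x -> S x) -> directed cle P -> is_lub cle P s -> S s).

Definition d_dense (C : dcone) (C0 : C -> Prop) : Prop :=
  forall S, d_subcone C S -> (forall x, C0 x -> S x) -> forall x, S x.

Definition bilinear (C D : dcone) (p : C -> D -> ER) : Prop :=
  (forall x y, ER_nonneg (p x y)) /\
  (forall x x' y, p (cadd x x') y = eadd (p x y) (p x' y)) /\
  (forall r x y, 0 <= r -> p (csmul r x) y = emul r (p x y)) /\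
  (forall x y y', p x (cadd y y') = eadd (p x y) (p x y')) /\
  (forall r x y, 0 <= r -> p x (csmul r y) = emul r (p x y)).

Definition non_singular (C D : dcone) (p : C -> D -> ER) : Prop :=
  forall y y' : D, y <> y' -> exists x : C, p x y <> p x y'.

Definition scott_cont_ER (C : dcone) (f : C -> ER) : Prop :=
  (forall x y, cle x y -> ele (f x) (f y)) /\
  (forall P s, directed cle P -> is_lub cle P s ->
     is_esup (fun v => exists x, P x /\ f x = v) (f s)).

(* ---------- weak upper topology w(D,B) ----------
   The coarsest topology on D making every  y |-> <x,y>  (x in B) lower
   semicontinuous, i.e. continuous for the upper topology on R̄+ (whose open
   sets are ∅, R̄+ and ]r,+∞], r in [0,∞)).  It is the topology generated by
   the subbasic sets  {y | r < <x,y>}, x in B, r >= 0. *)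
Inductive w_open (C D : dcone) (p : C -> D -> ER) (B : C -> Prop) : (D -> Prop) -> Prop :=
  | wo_sub : forall x r, B x -> 0 <= r -> w_open C D p B (fun y => egt r (p x y))
  | wo_full : w_open C D p B (fun _ => True)
  | wo_inter : forall U V, w_open C D p B U -> w_open C D p B V ->
      w_open C D p B (fun y => U y /\ V y)
  | wo_union : forall F : (D -> Prop) -> Prop, (forall U, F U -> w_open C D p B U) ->
      w_open C D p B (fun y => exists U, F U /\ U y)
  | wo_ext : forall U V, w_open C D p B U -> (forall y, U y <-> V y) -> w_open C D p B V.

(* The set of those x in C for which y |-> <x,y> is lower semicontinuous for
   w(D,C0) contains C0 and is a d-subcone of C, hence is all of C by d-density.
   It is closed under sums because {y | s < u + v} is the union of the sets
   {y | s < u}, {y | s < v} and {y | a < u, s - a < v} for 0 <= a <= s, and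
   closed under directed suprema because, by Scott continuity in the first
   argument, {y | r < <sup x_i, y>} is the union of the sets {y | r < <x_i, y>}. *)
From Pilot Require Import Defs.
From Stdlib Require Import Reals Lra Classical.
Open Scope R_scope.

Lemma emul_0_l (v : ER) : emul 0 v = Some 0.
Proof.
  destruct v as [a|]; simpl; [now rewrite Rmult_0_l |].
  destruct (Req_EM_T 0 0); [reflexivity | lra].
Qed.

Lemma egt_ele_trans (r : R) (u v : ER) : ele u v -> egt r u -> egt r v.
Proof. destruct u, v; simpl; intros; lra || tauto. Qed.

Lemma egt_emul (r s : R) (v : ER) : 0 < r -> egt s (emul r v) <-> egt (s / r) v.
Proof.
  intros Hr; destruct v as [a|]; simpl.
  - split; intros H.
    + apply (Rmult_lt_reg_l r); [exact Hr |]. field_simplify; lra.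
    + apply (Rmult_lt_compat_l r) in H; [| exact Hr]. field_simplify in H; lra.
  - destruct (Req_EM_T r 0); [lra | tauto].
Qed.

Lemma egt_eadd (s : R) (u v : ER) :
  ER_nonneg u -> ER_nonneg v ->
  egt s (eadd u v) <->
  egt s u \/ egt s v \/ exists a, 0 <= a <= s /\ egt a u /\ egt (s - a) v.
Proof.
  intros Hu Hv; destruct u as [u|], v as [v|]; simpl in *; try tauto.
  split.
  - intros Hs.
    destruct (Rlt_dec s u); [now left |].
    destruct (Rlt_dec s v); [now right; left |].
    right; right; exists (u - (u + v - s) / 2); lra.
  - intros [H | [H | [a [Ha [H1 H2]]]]]; lra.
Qed.

Lemma egt_esup (P : ER -> Prop) (s : ER) (r : R) :
  is_esup P s -> egt r s <-> exists v, P v /\ egt r v.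
Proof.
  intros [Hub Hleast]; split.
  - intros Hs; apply NNPP; intros Hnone.
    assert (Hle : ele s (Some r)).
    { apply Hleast; intros v Pv.
      destruct v as [a|]; simpl; [| now apply Hnone; exists None].
      apply Rnot_lt_le; intros Ha; apply Hnone; now exists (Some a). }
    destruct s; simpl in *; lra || tauto.
  - intros [v [Pv Hv]]; exact (egt_ele_trans r v s (Hub v Pv) Hv).
Qed.

Section WeakUpperTopology.

Variables (C D : dcone) (p : C -> D -> ER).

Lemma w_open_mono (B B' : C -> Prop) (U : D -> Prop) :
  (forall x, B x -> B' x) -> w_open C D p B U -> w_open C D p B' U.
Proof.
  intros HB H; induction H.
  - apply wo_sub; auto.
  - apply wo_full.
  - now apply wo_inter.
  - now apply wo_union.
  - eapply wo_ext; eauto.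
Qed.

Lemma w_open_Union (B : C -> Prop) (I : Type) (Q : I -> Prop) (F : I -> D -> Prop) :
  (forall i, Q i -> w_open C D p B (F i)) ->
  w_open C D p B (fun y => exists i, Q i /\ F i y).
Proof.
  intros HF.
  eapply wo_ext; [apply (wo_union C D p B (fun V => exists i, Q i /\ V = F i)) |].
  - intros V [i [Qi ->]]; auto.
  - intros y; split.
    + intros [V [[i [Qi ->]] Vy]]; eauto.
    + intros [i [Qi Fy]]; eauto.
Qed.

Lemma w_open_or (B : C -> Prop) (U V : D -> Prop) :
  w_open C D p B U -> w_open C D p B V -> w_open C D p B (fun y => U y \/ V y).
Proof.
  intros HU HV.
  eapply wo_ext; [apply (w_open_Union B bool (fun _ => True) (fun b => if b then U else V)) |].
  - intros []; auto.
  - intros y; split.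
    + intros [[] [_ H]]; auto.
    + intros [H | H]; [exists true | exists false]; auto.
Qed.

Definition w_lsc (B : C -> Prop) (x : C) : Prop :=
  forall r, 0 <= r -> w_open C D p B (fun y => egt r (p x y)).

Lemma w_open_of_w_lsc (B B' : C -> Prop) (U : D -> Prop) :
  (forall x, B' x -> w_lsc B x) -> w_open C D p B' U -> w_open C D p B U.
Proof.
  intros HB H; induction H.
  - now apply HB.
  - apply wo_full.
  - now apply wo_inter.
  - now apply wo_union.
  - eapply wo_ext; eauto.
Qed.

Lemma w_lsc_zero_pairing (B : C -> Prop) (x : C) :
  (forall y, p x y = Some 0) -> w_lsc B x.
Proof.
  intros H0 r Hr.
  eapply wo_ext; [apply (w_open_Union B False (fun _ => True) (fun _ _ => True)); tauto |].
  intros y; rewrite H0; simpl; split; [intros [[] _] | lra].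
Qed.

Lemma w_lsc_add (B : C -> Prop) (x x' z : C) :
  (forall y, ER_nonneg (p x y)) -> (forall y, ER_nonneg (p x' y)) ->
  (forall y, p z y = eadd (p x y) (p x' y)) ->
  w_lsc B x -> w_lsc B x' -> w_lsc B z.
Proof.
  intros Hnn Hnn' Hz Hx Hx' s Hs.
  eapply wo_ext.
  - apply w_open_or; [exact (Hx s Hs) |].
    apply w_open_or; [exact (Hx' s Hs) |].
    apply (w_open_Union B R (fun a => 0 <= a <= s)
             (fun a y => egt a (p x y) /\ egt (s - a) (p x' y))).
    intros a Ha; apply wo_inter; [apply Hx | apply Hx']; lra.
  - intros y; rewrite Hz, egt_eadd by auto.
    split; intros [H | [H | [a [Ha H]]]]; auto; right; right; eauto.
Qed.

Lemma w_lsc_scale (B : C -> Prop) (r : R) (x z : C) :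
  0 < r -> (forall y, p z y = emul r (p x y)) -> w_lsc B x -> w_lsc B z.
Proof.
  intros Hr Hz Hx s Hs.
  eapply wo_ext; [apply (Hx (s / r)) |].
  - apply Rmult_le_pos; [exact Hs | left; now apply Rinv_0_lt_compat].
  - intros y; rewrite Hz, egt_emul by exact Hr; tauto.
Qed.

Lemma w_lsc_sup (B : C -> Prop) (P : C -> Prop) (s : C) :
  (forall y, scott_cont_ER C (fun x => p x y)) ->
  directed cle P -> Defs.is_lub cle P s ->
  (forall x, P x -> w_lsc B x) -> w_lsc B s.
Proof.
  intros Hsc Hdir Hlub HP r Hr.
  eapply wo_ext.
  { apply (w_open_Union B C P (fun x y => egt r (p x y))).
    intros x Px; exact (HP x Px r Hr). }
  intros y; destruct (Hsc y) as [_ Hcont].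
  rewrite (egt_esup _ _ r (Hcont P s Hdir Hlub)).
  split.
  - intros [x [Px H]]; eauto.
  - intros [v [[x [Px <-]] H]]; eauto.
Qed.

Lemma bilinear_zero_l (y : D) : bilinear C D p -> p czero y = Some 0.
Proof.
  intros [_ [_ [Hsm _]]].
  rewrite <- (csmul_0 C czero), Hsm by lra; apply emul_0_l.
Qed.

Lemma w_lsc_d_subcone (B : C -> Prop) :
  bilinear C D p -> (forall y, scott_cont_ER C (fun x => p x y)) ->
  d_subcone C (w_lsc B).
Proof.
  intros Hbil Hsc; pose proof Hbil as [Hnn [Hadd [Hsm _]]].
  split; [split; [| split] |].
  - apply w_lsc_zero_pairing; intros y; exact (bilinear_zero_l y Hbil).
  - intros x x' Hx Hx'; apply (w_lsc_add B x x'); auto.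
  - intros r x Hr Hx.
    destruct (Req_EM_T r 0) as [-> | Hr0].
    + apply w_lsc_zero_pairing; intros y; rewrite csmul_0.
      exact (bilinear_zero_l y Hbil).
    + apply (w_lsc_scale B r x); [lra | intros y; now apply Hsm | exact Hx].
  - intros P s HP Hdir Hlub; exact (w_lsc_sup B P s Hsc Hdir Hlub HP).
Qed.

End WeakUpperTopology.

Theorem lemma4p6 (C D : dcone) (p : C -> D -> ER) (C0 : C -> Prop) :
  bilinear C D p ->
  non_singular C D p ->
  (forall y : D, scott_cont_ER C (fun x => p x y)) ->
  (forall x : C, scott_cont_ER D (fun y => p x y)) ->
  subcone C C0 ->
  d_dense C C0 ->
  forall U : D -> Prop, w_open C D p C0 U <-> w_open C D p (fun _ => True) U.
Proof.
  intros Hbil _ Hsc _ _ Hdense U; split.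
  - apply w_open_mono; auto.
  - apply w_open_of_w_lsc; intros x _.
    apply (Hdense (w_lsc C D p C0)); [now apply w_lsc_d_subcone |].
    intros x0 Hx0 r Hr; now apply wo_sub.
Qed.
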